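(* Let $n\ge1$ and $1>\mu_1>\mu_2>\dots>\mu_{n+1}>0$. Let $\mathcal{P}$ be the set of all polynomials $p(x)=(x-\lambda_1)(x-\lambda_2)\cdots(x-\lambda_n)$ with real $\lambda_k$ satisfying $\mu_k\ge\lambda_k\ge\mu_{k+1}$ for $k=1,\dots,n$. Then there exist constants $C>0$ and $0<c<1$, depending only on $\mu_1,\dots,\mu_{n+1}$, such that for every $m\ge1$ and all $p_1,\dots,p_m\in\mathcal{P}$, $$\|F(p_1)F(p_2)\cdots F(p_m)\|\le Cc^m.$$
   Context: For a monic polynomial $p(z)=z^n+b_{n-1}z^{n-1}+\dots+b_0$, its Frobenius matrix $F(p)$ is the $n\times n$ matrix whose first row is $(-b_{n-1},-b_{n-2},\dots,-b_0)$, whose entries $(i+1,i)$ for $i=1,\dots,n-1$ equal $1$, and all other entries are $0$. $\|\cdot\|$ denotes any fixed matrix norm (all are equivalent). *)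

From HB Require Import structures.
From mathcomp Require Import all_boot all_order all_algebra.
From mathcomp Require Import reals.
Set Implicit Arguments. Unset Strict Implicit. Unset Printing Implicit Defensive.
Import Order.TTheory GRing.Theory Num.Theory.
Local Open Scope ring_scope.

Definition frob {R : nzRingType} (n : nat) (p : {poly R}) : 'M[R]_n :=
  \matrix_(i < n, j < n)
    if (i == 0 :> nat) then - p`_(n.-1 - j)
    else if (i == j.+1 :> nat) then 1 else 0.

Definition mxprod {R : nzRingType} (n : nat) (s : seq 'M[R]_n) : 'M[R]_n :=
  foldr (fun A B => A *m B) 1%:M s.

(* a fixed matrix norm: the max-entry norm (all norms are equivalent) *)
Definition mxnorm {R : realDomainType} (n : nat) (A : 'M[R]_n) : R :=
  \big[Num.max/0]_(i < n) \big[Num.max/0]_(j < n) `|A i j|.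

(* The class P: mu k is mu_{k+1} of the paper (0-based indexing). *)
Definition inP {R : realDomainType} (n : nat) (mu : nat -> R) (p : {poly R}) : Prop :=
  exists lam : nat -> R,
    (forall k, (k < n)%N -> mu k.+1 <= lam k <= mu k) /\
    p = \prod_(k < n) ('X - (lam k)%:P).

From HB Require Import structures.
From mathcomp Require Import all_boot all_order all_algebra.
From mathcomp Require Import reals.
Set Implicit Arguments. Unset Strict Implicit. Unset Printing Implicit Defensive.
Import Order.TTheory GRing.Theory Num.Theory.
Local Open Scope ring_scope.

(* Identify a row vector w = (w_0, ..., w_(n-1)) with the polynomial
   W = \sum_i w_i X^(n-1-i) of degree < n; for p monic of degree n, right
   multiplication by F(p) becomes W |-> X W - w_0 p.  Expand W in the Lagrange
   basis at the n+1 nodes mu_1 > ... > mu_(n+1):  its coordinates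
   r_j = W(mu_j) / \prod_(k <> j) (mu_j - mu_k) sum to 0 because deg W < n, and
   the step becomes r_j |-> mu_j r_j - w_0 a_j, where the coordinates a_j of p
   are all >= 0 because the roots of p interlace the nodes.  For a zero-sum
   vector the l1 norm is twice the sum of the positive parts, and these shrink
   at least by the factor max_j mu_j = mu_1 < 1; since w depends linearly on
   the r_j, the entries of the product decay like mu_1^m. *)

Lemma ler_norm_add_self (R : realDomainType) (s t : R) : s <= t -> `|s| + s <= `|t| + t.
Proof.
move=> le_st; have [s_ge0 | s_lt0] := lerP 0 s.
  by rewrite !ger0_norm ?(le_trans s_ge0) // lerD.
by rewrite ltr0_norm // addNr -lerBlDr sub0r -normrN ler_norm.
Qed.

(* Over a zero-sum family, [\sum |x i| = \sum (|x i| + x i)]; the summand is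
   monotone in [x i], and [r' i <= m i * r i] once [c >= 0]. *)
Lemma sum_norm_contraction (R : realDomainType) (I : finType)
    (r r' m a : I -> R) (c M : R) :
  \sum_i r i = 0 -> \sum_i r' i = 0 ->
  (forall i, r' i = m i * r i - c * a i) ->
  (forall i, 0 <= a i) -> (forall i, 0 <= m i <= M) ->
  \sum_i `|r' i| <= M * \sum_i `|r i|.
Proof.
wlog c_ge0 : r r' c / 0 <= c => [hwlog r0 r'0 def_r' a_ge0 m_bnd | ].
  have [c_ge0 | c_lt0] := lerP 0 c; first exact: (hwlog r r' c).
  have sum_normN (s : I -> R) : \sum_i `|s i| = \sum_i `|- s i|.
    by apply: eq_bigr => i _; rewrite normrN.
  rewrite sum_normN [X in _ * X]sum_normN.
  apply: (hwlog (fun i => - r i) (fun i => - r' i) (- c)) => //.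
  - by rewrite oppr_ge0 ltW.
  - by rewrite sumrN r0 oppr0.
  - by rewrite sumrN r'0 oppr0.
  - by move=> i; rewrite def_r' opprB mulrN mulNr opprK addrC.
move=> r0 r'0 def_r' a_ge0 m_bnd.
have sum_normE (s : I -> R) : \sum_i s i = 0 -> \sum_i `|s i| = \sum_i (`|s i| + s i).
  by move=> s0; rewrite big_split /= s0 addr0.
rewrite sum_normE // [X in _ * X]sum_normE // mulr_sumr.
apply: ler_sum => i _; have /andP [m_ge0 m_le] := m_bnd i.
have le_r' : r' i <= m i * r i by rewrite def_r' lerBlDr lerDl mulr_ge0.
apply: le_trans (ler_norm_add_self le_r') _.
rewrite normrM (ger0_norm m_ge0) -mulrDr ler_wpM2r //.
by rewrite -lerBlDr sub0r -normrN ler_norm.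
Qed.

Lemma ler_sum_term (R : numDomainType) (I : finType) (F : I -> R) (i : I) :
  (forall j, 0 <= F j) -> F i <= \sum_j F j.
Proof. by move=> F_ge0; rewrite (bigD1 i) //= lerDl sumr_ge0. Qed.

Section LagrangeInterpolation.
Variables (F : fieldType) (N : nat) (x : 'I_N.+1 -> F).
Hypothesis x_inj : injective x.

Definition nodal (j : 'I_N.+1) : {poly F} :=
  \prod_(k < N) ('X - (x (lift j k))%:P).

Definition lagrange_coord (f : {poly F}) (j : 'I_N.+1) : F :=
  f.[x j] / (nodal j).[x j].

Lemma monic_nodal j : nodal j \is monic.
Proof. exact: monic_prod_XsubC. Qed.

Lemma size_nodal j : size (nodal j) = N.+1.
Proof. by rewrite /nodal -big_enum size_prod_XsubC size_enum_ord. Qed.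

Lemma horner_nodal_eq0 j m : m != j -> (nodal j).[x m] = 0.
Proof.
rewrite eq_sym => /unlift_some [k -> _].
by rewrite horner_prod (bigD1 k) //= hornerXsubC subrr mul0r.
Qed.

Lemma horner_nodal_neq0 j : (nodal j).[x j] != 0.
Proof.
rewrite horner_prod prodf_seq_neq0; apply/allP => k _ /=.
by rewrite hornerXsubC subr_eq0 (inj_eq x_inj) neq_lift.
Qed.

Lemma lagrange_interpolation (f : {poly F}) :
  (size f <= N.+1)%N -> f = \sum_j lagrange_coord f j *: nodal j.
Proof.
move=> size_f; apply/eqP; rewrite -subr_eq0; apply/eqP.
apply: (@roots_geq_poly_eq0 _ _ (codom x)).
- apply/allP => _ /codomP [m ->].
  rewrite /root hornerD hornerN horner_sum (bigD1 m) //= big1 => [|j ne_jm].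
    by rewrite addr0 hornerZ divfK ?horner_nodal_neq0 // subrr.
  by rewrite hornerZ horner_nodal_eq0 ?mulr0 // eq_sym.
- by rewrite map_inj_uniq ?enum_uniq.
- rewrite size_codom card_ord (leq_trans (size_polyD _ _)) // size_polyN.
  rewrite geq_max size_f (leq_trans (size_sum _ _ _)) //.
  by apply/bigmax_leqP => j _; rewrite (leq_trans (size_scale_leq _ _)) ?size_nodal.
Qed.

Lemma sum_lagrange_coord (f : {poly F}) :
  (size f <= N.+1)%N -> \sum_j lagrange_coord f j = f`_N.
Proof.
move=> size_f; rewrite [in RHS](lagrange_interpolation size_f) coef_sum.
apply: eq_bigr => j _; rewrite coefZ.
by have := monicP (monic_nodal j); rewrite /lead_coef size_nodal => ->; rewrite mulr1.
Qed.

End LagrangeInterpolation.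

Definition nodal_coef_bound (R : numFieldType) N (x : 'I_N.+1 -> R) : R :=
  \sum_j \sum_(e < N.+1) `|(nodal x j)`_e|.

Lemma nodal_coef_bound_ge0 (R : numFieldType) N (x : 'I_N.+1 -> R) :
  0 <= nodal_coef_bound x.
Proof. by apply: sumr_ge0 => j _; apply: sumr_ge0. Qed.

Lemma norm_coef_le_lagrange (R : numFieldType) N (x : 'I_N.+1 -> R) (f : {poly R}) e :
  injective x -> (size f <= N.+1)%N -> (e < N.+1)%N ->
  `|f`_e| <= nodal_coef_bound x * \sum_j `|lagrange_coord x f j|.
Proof.
move=> x_inj size_f lt_e.
rewrite {1}(lagrange_interpolation x_inj size_f) coef_sum mulr_sumr.
apply: le_trans (ler_norm_sum _ _ _) _; apply: ler_sum => j _.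
rewrite coefZ normrM mulrC ler_wpM2r //.
apply: le_trans (ler_sum_term j _) => [|i]; last exact: sumr_ge0.
by apply: (ler_sum_term (Ordinal lt_e)).
Qed.

Section RowPolynomial.
Variables (R : nzRingType) (n : nat).

Definition row_poly (w : 'rV[R]_n.+1) : {poly R} :=
  \poly_(k < n.+1) w 0 (inord (n - k)).

Lemma size_row_poly w : (size (row_poly w) <= n.+1)%N.
Proof. exact: size_poly. Qed.

Lemma coef_row_poly w (i : 'I_n.+1) : (row_poly w)`_(n - i) = w 0 i.
Proof. by rewrite coef_poly ltnS leq_subr subKn ?inord_val // -ltnS. Qed.

Lemma row_mul_frob (w : 'rV[R]_n.+1) (p : {poly R}) (j : 'I_n.+1) :
  (w *m frob n.+1 p) 0 j =
    (if (j < n)%N then w 0 (inord j.+1) else 0) - w 0 0 * p`_(n - j).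
Proof.
rewrite !mxE big_ord_recl !mxE /= mulrN addrC; congr (_ - _).
under eq_bigr => i _ do rewrite mxE /= /bump leq0n add1n eqSS.
case: ifP => lt_jn.
  rewrite (bigD1 (Ordinal lt_jn)) //= eqxx mulr1 big1 ?addr0.
    by congr (w 0 _); apply: val_inj; rewrite /= inordK.
  by move=> i; rewrite -(inj_eq val_inj) => /negPf /= ->; rewrite mulr0.
apply: big1 => i _; case: eqP => [eq_ji | _]; last by rewrite mulr0.
by move: (ltn_ord i); rewrite eq_ji lt_jn.
Qed.

Lemma row_poly_mul_frob w (p : {poly R}) :
  p \is monic -> size p = n.+2 ->
  row_poly (w *m frob n.+1 p) = 'X * row_poly w - w 0 0 *: p.
Proof.
move=> /monicP lead_p size_p; apply/polyP => k.
have top_p : p`_n.+1 = 1 by rewrite -lead_p /lead_coef size_p.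
rewrite coef_poly coefB coefXM coefZ.
have [le_kn | lt_nk] := ltnP k n.+1.
  rewrite row_mul_frob inordK ?ltnS ?leq_subr // subKn; last by rewrite -ltnS.
  case: k le_kn => [|k] lt_kn /=; first by rewrite subn0 ltnn.
  rewrite ltnS in lt_kn.
  by rewrite ltn_subrL (leq_ltn_trans (leq0n k) lt_kn) /= coef_poly ltnS (ltnW lt_kn) subnSK.
case: k lt_nk => [//|k]; rewrite ltnS leq_eqVlt => /predU1P [<- | lt_nk] /=.
  by rewrite coef_poly ltnSn subnn (inord_val (@ord0 n)) top_p mulr1 subrr.
by rewrite coef_poly ltnNge lt_nk /= nth_default ?mulr0 ?subrr // size_p.
Qed.

End RowPolynomial.

Lemma mxnorm_le (R : realDomainType) n (A : 'M[R]_n) (B : R) :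
  0 <= B -> (forall i j, `|A i j| <= B) -> mxnorm A <= B.
Proof. by move=> B_ge0 le_AB; do 2!apply: bigmax_le => // ? _. Qed.

Lemma inP_monic (R : realDomainType) n (mu : nat -> R) p :
  inP n mu p -> p \is monic /\ size p = n.+1.
Proof.
case=> lam [_ ->]; split; first exact: monic_prod_XsubC.
by rewrite -big_enum size_prod_XsubC size_enum_ord.
Qed.

Section CompanionContraction.
Variables (R : realFieldType) (n : nat) (mu : nat -> R).
Hypothesis mu_decr : forall k, (k < n.+1)%N -> mu k.+1 < mu k.
Hypothesis mu_gt0 : 0 < mu n.+1.

Lemma mu_le i j :
  (i <= n.+1)%N -> (j <= n.+1)%N -> (mu j <= mu i) = (i <= j)%N.
Proof.
move=> le_i le_j.
have mu_mono := @Order.NatMonotonyTheory.decn_inP _ _ [pred k | (k <= n.+1)%N] mu.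
rewrite mu_mono //.
  move=> a b _; rewrite !inE => le_b c /andP [_ /ltnW le_cb].
  exact: leq_trans le_cb le_b.
by move=> k _; rewrite inE; apply: mu_decr.
Qed.

Lemma mu0_gt0 : 0 < mu 0.
Proof. by apply: lt_le_trans mu_gt0 _; rewrite mu_le. Qed.

Let mu0_ge0 : 0 <= mu 0 := ltW mu0_gt0.

Let node (j : 'I_n.+2) : R := mu j.

Lemma node_inj : injective node.
Proof.
move=> i j eq_ij; apply/val_inj/eqP.
rewrite eqn_leq -(mu_le (leq_ord i) (leq_ord j)) -(mu_le (leq_ord j) (leq_ord i)).
by rewrite /node in eq_ij; rewrite eq_ij lexx.
Qed.

Definition row_coord (w : 'rV[R]_n.+1) : 'I_n.+2 -> R :=
  lagrange_coord node (row_poly w).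

Definition row_norm (w : 'rV[R]_n.+1) : R := \sum_j `|row_coord w j|.

Lemma row_norm_ge0 w : 0 <= row_norm w.
Proof. exact: sumr_ge0. Qed.

Lemma sum_row_coord w : \sum_j row_coord w j = 0.
Proof.
rewrite sum_lagrange_coord ?coef_poly ?ltnn //; first exact: node_inj.
exact: leq_trans (size_row_poly w) (leqnSn _).
Qed.

(* Interlacing: the [k]-th factor of [p.[mu j]] and of [(nodal node j).[mu j]]
   have the same sign, since [lam k] and [mu (lift j k)] lie on the same side
   of [mu j]. *)
Lemma lagrange_coord_inP_ge0 p j :
  inP n.+1 mu p -> 0 <= lagrange_coord node p j.
Proof.
case=> lam [lam_bnd ->]; rewrite /lagrange_coord !horner_prod -prodf_div.
apply: prodr_ge0 => k _; rewrite !hornerXsubC /node /= /bump.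
have /andP [lam_ge lam_le] := lam_bnd k (ltn_ord k).
have le_k : (k <= n.+1)%N by rewrite ltnW.
have [le_jk | lt_kj] := leqP j k; rewrite ?add1n ?add0n.
  rewrite divr_ge0 // subr_ge0; last by rewrite mu_le ?leq_ord // leqW.
  by rewrite (le_trans lam_le) // mu_le ?leq_ord.
apply: mulr_le0; rewrite ?invr_le0 subr_le0; last by rewrite mu_le ?leq_ord // ltnW.
by rewrite (le_trans _ lam_ge) // mu_le ?leq_ord.
Qed.

Lemma row_coord_mul_frob w p j : inP n.+1 mu p ->
  row_coord (w *m frob n.+1 p) j =
    node j * row_coord w j - w 0 0 * lagrange_coord node p j.
Proof.
case/inP_monic => monic_p size_p; rewrite /row_coord /lagrange_coord.
rewrite row_poly_mul_frob // hornerD hornerN hornerZ hornerM hornerX.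
by rewrite mulrBl !mulrA.
Qed.

Lemma row_norm_mul_frob w p :
  inP n.+1 mu p -> row_norm (w *m frob n.+1 p) <= mu 0 * row_norm w.
Proof.
move=> Pp; apply: (sum_norm_contraction (m := node)
  (a := lagrange_coord node p) (c := w 0 0)) => [||j|j|j].
- exact: sum_row_coord.
- exact: sum_row_coord.
- exact: row_coord_mul_frob.
- exact: lagrange_coord_inP_ge0.
rewrite /node mu_le ?leq_ord // andbT ltW // (lt_le_trans mu_gt0) //.
by rewrite mu_le ?leq_ord.
Qed.

Lemma row_norm_mul_mxprod ps w : (forall p, p \in ps -> inP n.+1 mu p) ->
  row_norm (w *m mxprod (map (frob n.+1) ps)) <= mu 0 ^+ size ps * row_norm w.
Proof.
elim: ps w => [|p ps IH] w Pps; first by rewrite mulmx1 expr0 mul1r.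
rewrite /= mulmxA exprS -mulrA.
apply: le_trans (IH _ _) _ => [q ps_q|]; first by apply: Pps; rewrite inE ps_q orbT.
rewrite mulrCA ler_wpM2l ?exprn_ge0 //.
by apply: row_norm_mul_frob; apply: Pps; rewrite mem_head.
Qed.

Lemma norm_entry_le_row_norm (w : 'rV[R]_n.+1) i :
  `|w 0 i| <= nodal_coef_bound node * row_norm w.
Proof.
rewrite -coef_row_poly norm_coef_le_lagrange //; first exact: node_inj.
  exact: leq_trans (size_row_poly w) _.
by rewrite ltnS (leq_trans (leq_subr _ _)).
Qed.

Definition mxprod_bound : R :=
  nodal_coef_bound node * \sum_i row_norm (row i (1%:M : 'M[R]_n.+1)).

Lemma mxprod_bound_ge0 : 0 <= mxprod_bound.
Proof.
by rewrite mulr_ge0 ?nodal_coef_bound_ge0 // sumr_ge0 // => i _; apply: row_norm_ge0.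
Qed.

Lemma mxnorm_mxprod_le ps : (forall p, p \in ps -> inP n.+1 mu p) ->
  mxnorm (mxprod (map (frob n.+1) ps)) <= mxprod_bound * mu 0 ^+ size ps.
Proof.
move=> Pps; apply: mxnorm_le => [|i j].
  by rewrite mulr_ge0 ?mxprod_bound_ge0 ?exprn_ge0.
set M := mxprod _; have -> : M i j = (row i 1%:M *m M) 0 j.
  by rewrite -row_mul mul1mx mxE.
apply: le_trans (norm_entry_le_row_norm _ _) _.
rewrite /mxprod_bound -mulrA ler_wpM2l ?nodal_coef_bound_ge0 //.
apply: le_trans (row_norm_mul_mxprod _ Pps) _.
rewrite mulrC ler_wpM2r ?exprn_ge0 //.
exact: ler_sum_term i (fun k => row_norm_ge0 _).
Qed.

End CompanionContraction.

Theorem lemma3p2 (R : realType) (n : nat) (mu : nat -> R)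
  (hn : (1 <= n)%N)
  (hmu1 : mu 0%N < 1) (hmun : 0 < mu n)
  (hdec : forall k, (k < n)%N -> mu k.+1 < mu k) :
  exists C c : R, 0 < C /\ 0 < c < 1 /\
    forall ps : seq {poly R}, (1 <= size ps)%N ->
      (forall p, p \in ps -> inP n mu p) ->
      mxnorm (mxprod (map (frob n) ps)) <= C * c ^+ size ps.
Proof.
case: n hn hmun hdec => [//|n] _ mu_gt0 mu_decr.
have mu0_gt0 := mu0_gt0 mu_decr mu_gt0.
have bound_ge0 := mxprod_bound_ge0 n mu.
exists (mxprod_bound n mu + 1), (mu 0).
split; first by rewrite (le_lt_trans bound_ge0) // ltrDl ltr01.
split=> [|ps _ Pps]; first by rewrite mu0_gt0 hmu1.
apply: le_trans (mxnorm_mxprod_le mu_decr mu_gt0 Pps) _.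
by rewrite ler_wpM2r ?exprn_ge0 ?(ltW mu0_gt0) // lerDl.
Qed.
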